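(* Let $([n],\mathcal{I})$ be a downward-closed set system on the set of bidders $[n]$ that is not a matroid. Then MyerOPT is not RMMB: there exist distributions $F_1,\dots,F_n$, a partition $[n]=G\cup R$ with $G\neq\emptyset$, and fixed red bids $b_i\in V_i$ ($i\in R$) such that $$\mathbb{E}_{\vec b_G\sim\prod_{i\in G}F_i}\big[\mathrm{Rev}(\mathrm{MyerOPT}_{[n]}(\vec b_G,\vec b_R))\big]\;<\;\mathbb{E}_{\vec b_G\sim\prod_{i\in G}F_i}\big[\mathrm{Rev}(\mathrm{MyerOPT}_G(\vec b_G))\big].$$
   Context: Single-parameter environment: bidders $[n]$; a feasibility constraint $\mathcal{I}\subseteq 2^{[n]}$ with $\emptyset\in\mathcal{I}$ that is downward-closed (if $B\in\mathcal{I}$ and $A\subseteq B$ then $A\in\mathcal{I}$). A matroid is such a system that also satisfies the exchange axiom: if $A,B\in\mathcal{I}$ and $|A|>|B|$ then there is $x\in A\setminus B$ with $B\cup\{x\}\in\mathcal{I}$. Each bidder $i$ has a specified value distribution $F_i$ on $\mathbb{R}_{\ge0}$ with support $V_i$. The (ironed) virtual value function $\phi_i$ of $F_i$ is defined in quantile space: let $v_i(q)=\min\{v: F_i(v)\ge 1-q\}$ for $q\in[0,1]$, $R_i(q)=q\,v_i(q)$, $\overline{R_i}$ the least concave majorant of $R_i$ on $[0,1]$, and $\phi_i(v_i(q))=\overline{R_i}'(q)$ (for a regular distribution with density $f_i$ this equals $z-\frac{1-F_i(z)}{f_i(z)}$ at $z=v_i(q)$; for a point mass at $c$ it is constantly $c$).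 For $S\subseteq[n]$ and bids $b_i\in V_i$ ($i\in S$), the mechanism $\mathrm{MyerOPT}_S$ works as follows: discard bidders $i\in S$ with $\phi_i(b_i)<0$; among the sets $T\in\mathcal{I}$ with $T$ contained in the remaining bidders, select a set of winners maximizing $\sum_{i\in T}\phi_i(b_i)$ (ties broken by a fixed deterministic rule); each winner $i$ pays its critical bid, i.e. the infimum of those $z\in V_i$ such that $i$ would still be a winner if it bid $z$ with all other bids unchanged; losers pay $0$. $\mathrm{Rev}$ denotes the sum of the payments. $\mathrm{MyerOPT}$ (or $\mathrm{MyerOPT}_{[n]}$) is this mechanism run on all bidders with all specified distributions. The mechanism is RMMB (Revenue Monotone under Misspecified Bidders) for the feasibility constraint if for all distributions, all partitions $[n]=G\cup R$ with $G\ne\emptyset$ (''green'' and ''red'' bidders), and all fixed red bids $b_i\in V_i$ ($i\in R$), the expected revenue (over $\vec b_G\sim\prod_{i\in G}F_i$) of $\mathrm{MyerOPT}_{[n]}$ on $(\vec b_G,\vec b_R)$ is at least the expected revenue of $\mathrm{MyerOPT}_G$ on $\vec b_G$. *)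

From HB Require Import structures.
From mathcomp Require Import all_boot all_order all_algebra.
From mathcomp Require Import boolp classical_sets reals topology normedtype derive.
Set Implicit Arguments. Unset Strict Implicit. Unset Printing Implicit Defensive.
Import Order.TTheory GRing.Theory Num.Theory.
Import numFieldNormedType.Exports.
Local Open Scope ring_scope.


Definition downward_closed (n : nat) (I : {set {set 'I_n}}) : Prop :=
  forall A B : {set 'I_n}, B \in I -> A \subset B -> A \in I.

Definition exchange_axiom (n : nat) (I : {set {set 'I_n}}) : Prop :=
  forall A B : {set 'I_n}, A \in I -> B \in I -> (#|B| < #|A|)%N ->
    exists x, x \in A :\: B /\ ([set x] :|: B) \in I.

Definition is_matroid (n : nat) (I : {set {set 'I_n}}) : Prop :=
  finset.set0 \in I /\ downward_closed I /\ exchange_axiom I.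

(* A tie-breaking rule: a fixed deterministic choice of one set among the
   (nonempty) set of optimal feasible sets. *)
Definition tie_breaking_rule (n : nat) (tb : {set {set 'I_n}} -> {set 'I_n}) : Prop :=
  forall A : {set {set 'I_n}}, A != finset.set0 -> tb A \in A.

Record fdist (R : realType) := FDist {
  fd_supp : seq R;
  fd_pmf : R -> R;
  fd_uniq : uniq fd_supp;
  fd_nonneg : all (fun x => 0 <= x) fd_supp;
  fd_pos : all (fun x => 0 < fd_pmf x) fd_supp;
  fd_sum1 : \sum_(x <- fd_supp) fd_pmf x == 1 }.

Section VirtualValues.
Variable R : realType.
Variable D : fdist R.

Definition cdf (v : R) : R := \sum_(x <- fd_supp D | x <= v) fd_pmf D x.

Definition quantile_value (q : R) : R :=
  inf [set v : R | 0 <= v /\ 1 - q <= cdf v]%classic.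

Definition revenue_curve (q : R) : R := q * quantile_value q.

Definition concave01 (g : R -> R) : Prop :=
  forall x y t : R, 0 <= x <= 1 -> 0 <= y <= 1 -> 0 <= t <= 1 ->
    t * g x + (1 - t) * g y <= g (t * x + (1 - t) * y).

Definition ironed_revenue (q : R) : R :=
  inf [set y : R | exists g : R -> R, concave01 g /\
         (forall q', 0 <= q' <= 1 -> revenue_curve q' <= g q') /\ y = g q]%classic.

(* (ironed) virtual value phi(z) = ironed_revenue'(q) for a quantile q with
   v(q) = z; for an atom z, the quantiles q with v(q) = z form the interval
   [1 - F(z), 1 - F(z) + Pr[z]), and we take its midpoint (an interior point,
   where the least concave majorant is differentiable). *)
Definition virtual_value (z : R) : R :=
  derive1 ironed_revenue (1 - cdf z + fd_pmf D z / 2).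

End VirtualValues.

Section Myerson.
Variable R : realType.
Variable n : nat.
Variable D : 'I_n -> fdist R.
Variable I : {set {set 'I_n}}.
Variable tb : {set {set 'I_n}} -> {set 'I_n}.

Definition phi (i : 'I_n) (x : R) : R := virtual_value (D i) x.

Definition upd (b : 'I_n -> R) (i : 'I_n) (z : R) : 'I_n -> R :=
  fun j => if j == i then z else b j.

Definition remaining (S : {set 'I_n}) (b : 'I_n -> R) : {set 'I_n} :=
  [set i in S | 0 <= phi i (b i)].

Definition vv_weight (b : 'I_n -> R) (T : {set 'I_n}) : R :=
  \sum_(i in T) phi i (b i).

Definition candidates (S : {set 'I_n}) (b : 'I_n -> R) : {set {set 'I_n}} :=
  [set T : {set 'I_n} | (T \in I) && (T \subset remaining S b)].

Definition optimal_sets (S : {set 'I_n}) (b : 'I_n -> R) : {set {set 'I_n}} :=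
  [set T in candidates S b |
     [forall T' in candidates S b, vv_weight b T' <= vv_weight b T]].

Definition winners (S : {set 'I_n}) (b : 'I_n -> R) : {set 'I_n} :=
  tb (optimal_sets S b).

Definition critical_bid (S : {set 'I_n}) (b : 'I_n -> R) (i : 'I_n) : R :=
  inf [set z : R | z \in fd_supp (D i) /\ i \in winners S (upd b i z)]%classic.

Definition Rev (S : {set 'I_n}) (b : 'I_n -> R) : R :=
  \sum_(i in winners S b) critical_bid S b i.

(* expectation of h over the bids of the bidders in l, drawn independently
   from their distributions; the other coordinates are taken from b *)
Fixpoint expect (l : seq 'I_n) (h : ('I_n -> R) -> R) (b : 'I_n -> R) : R :=
  match l with
  | [::] => h b
  | i :: l' => \sum_(x <- fd_supp (D i)) fd_pmf (D i) x * expect l' h (upd b i x)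
  end.

End Myerson.

(* Since the exchange axiom fails, there are feasible A, B with |B| < |A|
   such that no x in A \ B extends B; exchanging elements we may take the
   pair *tight*: (A - i) + y is infeasible for i in A \ B, y in B \ A.
   Bidders of A ∩ B get a point mass at a large N, bidders of B \ A a point
   mass at 1, bidders of A \ B a two-point law on {low, N} whose virtual
   value at low is small but positive, and all other bidders a law with
   negative virtual value at 0.  The green bidders are B (all point masses,
   so expectations are just values); the red bidders of A \ B bid N, the
   others 0.  On all bidders MyerOPT selects A, and by tightness A still wins
   when a bidder of A \ B bids low, so those bidders pay low; on B alone, B
   wins and pays its values.  Revenue drops from |A ∩ B| N + |B \ A| to
   |A ∩ B| N + |A \ B| low. *)

From HB Require Import structures.
From mathcomp Require Import all_boot all_order all_algebra.
From mathcomp Require Import boolp classical_sets reals topology normedtype derive.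
From mathcomp Require Import ring lra.
Set Implicit Arguments. Unset Strict Implicit. Unset Printing Implicit Defensive.
Import Order.TTheory GRing.Theory Num.Theory.
Import numFieldNormedType.Exports.
Local Open Scope ring_scope.

Section RealFacts.
Variable R : realType.

Lemma inf_attained (E : set R) m : E m -> (forall x, E x -> m <= x) -> inf E = m.
Proof.
move=> Em lb; apply/le_anti/andP; split; first by apply: ge_inf => //; exists m.
by apply: lb_le_inf => //; exists m.
Qed.

Lemma le_up_to_slack (x y K delta : R) : 0 < delta -> 0 <= K ->
  (forall d, 0 < d < delta -> x <= y + d * K) -> x <= y.
Proof.
move=> delta0 K0 slack; apply/ler_addgt0Pr => e e0.
pose d := Order.min (delta / 2) (e / (K + 1)).
have d_le1 : d <= delta / 2 by rewrite /d ge_min lexx.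
have d_le2 : d <= e / (K + 1) by rewrite /d ge_min lexx orbT.
have d0 : 0 < d by rewrite /d lt_min; apply/andP; split; apply: divr_gt0 => //; lra.
have dK : d * (K + 1) <= e by rewrite -ler_pdivlMr //; lra.
have dK_le_e : d * K <= e by apply: le_trans dK; rewrite ler_pM2l // lerDl.
have : x <= y + d * K by apply: slack; rewrite d0 /=; lra.
lra.
Qed.

Lemma derive1_locally_affine (f : R -> R) (x0 l u s t : R) :
  l < x0 < u -> (forall q, l < q < u -> f q = s * q + t) -> derive1 f x0 = s.
Proof.
move=> x0lu affine.
rewrite derive1E (@near_eq_derive _ _ _ f (fun q => s * q + t)); last first.
  have := @near_in_itvoo R l u x0; rewrite in_itv /= x0lu => /(_ isT) near_x0.
  near=> q; have : q \in `]l, u[ by near: q.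
  by rewrite in_itv /= => /affine.
rewrite deriveD //= ?deriveM //= derive_id !derive_cst scaler0 !addr0.
by rewrite -[RHS]mulr1.
Unshelve. all: by end_near. Qed.

End RealFacts.

Section RevenueCurves.
Variables (R : realType) (D : fdist R).

Lemma ironed_revenueE q (h : R -> R) : concave01 h ->
  (forall q', 0 <= q' <= 1 -> revenue_curve D q' <= h q') ->
  (forall g, concave01 g -> (forall q', 0 <= q' <= 1 -> revenue_curve D q' <= g q') ->
     h q <= g q) ->
  ironed_revenue D q = h q.
Proof.
move=> h_concave h_major h_least; apply: inf_attained; first by exists h.
by move=> y [g [g_concave [g_major ->]]]; exact: h_least.
Qed.

Lemma cdf_ge0 v : 0 <= cdf D v.
Proof.
rewrite /cdf big_seq_cond sumr_ge0 // => x /andP[x_supp _].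
by have /allP/(_ x x_supp) := fd_pos D => /ltW.
Qed.

(* At quantile 1 the value 0 already qualifies, so v(1) <= 0. *)
Lemma quantile_value1_le0 : quantile_value D 1 <= 0.
Proof.
apply: ge_inf; first by exists 0 => y [].
by split => //; rewrite subrr cdf_ge0.
Qed.

End RevenueCurves.

Section PointMass.
Variables (R : realType) (c : R).
Hypothesis c_ge0 : 0 <= c.

Lemma point_mass_uniq : uniq [:: c]. Proof. by []. Qed.
Lemma point_mass_nonneg : all (fun x => 0 <= x) [:: c]. Proof. by rewrite /= c_ge0. Qed.
Lemma point_mass_pos : all (fun x => 0 < (fun _ : R => 1 : R) x) [:: c].
Proof. by rewrite /= ltr01. Qed.
Lemma point_mass_sum1 : \sum_(x <- [:: c]) (fun _ : R => 1 : R) x == 1.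
Proof. by rewrite big_seq1. Qed.

Definition point_mass : fdist R :=
  FDist point_mass_uniq point_mass_nonneg point_mass_pos point_mass_sum1.

Lemma cdf_point_mass v : cdf point_mass v = if c <= v then 1 else 0.
Proof. by rewrite /cdf /= big_cons big_nil; case: ifP; rewrite ?addr0. Qed.

Lemma quantile_point_mass q : 0 <= q < 1 -> quantile_value point_mass q = c.
Proof.
case/andP=> q0 q1; apply: inf_attained.
  by split => //; rewrite cdf_point_mass lexx lerBlDr lerDl.
by move=> v [v0]; rewrite cdf_point_mass; case: ifP => // _; lra.
Qed.

(* The revenue curve is c q on [0, 1[ and at most c at 1, so the linear
   function c q is its least concave majorant on ]0, 1[. *)
Lemma ironed_point_mass q : 0 < q < 1 -> ironed_revenue point_mass q = c * q.
Proof.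
move=> /andP[q0 q1]; apply: (@ironed_revenueE _ _ _ (fun q => c * q)).
- by move=> x y t _ _ _; rewrite mulrDr !mulrA [c * t]mulrC [c * (1 - t)]mulrC.
- move=> q' /andP[q'0]; rewrite le_eqVlt => /orP[/eqP->|q'1].
    by rewrite /revenue_curve mul1r mulr1 (le_trans (quantile_value1_le0 _) c_ge0).
  by rewrite /revenue_curve quantile_point_mass ?q'0 // mulrC.
- move=> g _ g_major; have := g_major q; rewrite /revenue_curve.
  rewrite quantile_point_mass; last by apply/andP; split; lra.
  by rewrite mulrC; apply; lra.
Qed.

Lemma vv_point_mass : virtual_value point_mass c = c.
Proof.
rewrite /virtual_value cdf_point_mass lexx /= subrr add0r.
have half01 : (0 < (1 / 2 : R)) && ((1 / 2 : R) < 1) by apply/andP; split; lra.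
apply: (derive1_locally_affine (t := 0) half01) => q /ironed_point_mass ->.
by rewrite addr0.
Qed.

End PointMass.

Section TwoPoint.
Variables (R : realType) (a b p : R).
Hypotheses (a_ge0 : 0 <= a) (a_lt_b : a < b) (p_gt0 : 0 < p) (p_lt1 : p < 1).

(* lra/nra only use local assumptions: copy the section hypotheses there. *)
Local Ltac params := move: (a_ge0) (a_lt_b) (p_gt0) (p_lt1) => ? ? ? ?.

Definition two_point_pmf (x : R) : R := if x == b then p else 1 - p.

Lemma two_point_uniq : uniq [:: a; b]. Proof. by rewrite /= inE andbT lt_eqF. Qed.
Lemma two_point_nonneg : all (fun x => 0 <= x) [:: a; b].
Proof. by rewrite /= a_ge0 (le_trans a_ge0 (ltW a_lt_b)). Qed.
Lemma two_point_pos : all (fun x => 0 < two_point_pmf x) [:: a; b].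
Proof. by rewrite /= /two_point_pmf (lt_eqF a_lt_b) eqxx p_gt0 subr_gt0 p_lt1. Qed.
Lemma two_point_sum1 : \sum_(x <- [:: a; b]) two_point_pmf x == 1.
Proof. by rewrite big_cons big_seq1 /two_point_pmf (lt_eqF a_lt_b) eqxx subrK. Qed.

Definition two_point : fdist R :=
  FDist two_point_uniq two_point_nonneg two_point_pos two_point_sum1.

Lemma cdf_two_point v :
  cdf two_point v = (if a <= v then 1 - p else 0) + (if b <= v then p else 0).
Proof.
rewrite /cdf /= !big_cons big_nil /two_point_pmf (lt_eqF a_lt_b) eqxx.
by case: ifP; case: ifP; rewrite ?addr0 ?add0r.
Qed.

Lemma quantile_two_point_high q : 0 <= q < p -> quantile_value two_point q = b.
Proof.
params; case/andP=> q0 qp; apply: inf_attained.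
  split; first exact: le_trans a_ge0 (ltW a_lt_b).
  by rewrite cdf_two_point lexx (ltW a_lt_b) subrK; lra.
move=> v [v0]; rewrite cdf_two_point.
by case: (leP b v) => // bv; case: ifP => _ qv; exfalso; lra.
Qed.

Lemma quantile_two_point_low q : p <= q < 1 -> quantile_value two_point q = a.
Proof.
params; case/andP=> pq q1; apply: inf_attained.
  by split => //; rewrite cdf_two_point lexx (lt_geF a_lt_b) addr0; lra.
move=> v [v0]; rewrite cdf_two_point.
case: (leP a v) => // va; rewrite ifF; first lra.
by apply/negbTE; rewrite -ltNge (lt_trans va a_lt_b).
Qed.

(* The revenue curve is b q on [0, p[ and a q on [p, 1[.  Its least concave
   majorant follows b q up to p and then the line through (p, p b) towards
   (1, a), whose slope is low_slope. *)
Definition low_slope : R := (a - p * b) / (1 - p).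
Definition low_line (q : R) : R := low_slope * q + (p * b - low_slope * p).
Definition two_point_majorant (q : R) : R := Order.min (b * q) (low_line q).

Lemma low_slopeE : low_slope * (1 - p) = a - p * b.
Proof. by params; rewrite /low_slope mulfVK //; apply/eqP => h; lra. Qed.

(* The sign of the virtual value at the low value is that of a - p b. *)
Lemma low_slope_gt0 : p * b < a -> 0 < low_slope.
Proof. by move=> pba; rewrite /low_slope divr_gt0 // subr_gt0. Qed.

Lemma low_slope_lt0 : a < p * b -> low_slope < 0.
Proof. by move=> apb; rewrite /low_slope pmulr_llt0 ?invr_gt0 ?subr_lt0 ?subr_gt0. Qed.

Lemma low_slope_le_a : low_slope <= a.
Proof.
params; have := low_slopeE; have : 0 < 1 - p by lra.
nra.
Qed.

Lemma low_line_ge_high q : q <= p -> b * q <= low_line q.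
Proof. by params; move=> qp; have := low_slope_le_a; rewrite /low_line; nra. Qed.

Lemma low_line_le_high q : p <= q -> low_line q <= b * q.
Proof. by params; move=> pq; have := low_slope_le_a; rewrite /low_line; nra. Qed.

Lemma low_line_ge_low q : q <= 1 -> a * q <= low_line q.
Proof.
params; move=> q1; rewrite -subr_ge0.
have -> : low_line q - a * q
    = p * (1 - q) * (b - low_slope) + (low_slope * (1 - p) + p * b - a) * q.
  by rewrite /low_line; ring.
rewrite low_slopeE subrK subrr mul0r addr0.
have sa := low_slope_le_a.
by apply: mulr_ge0; [apply: mulr_ge0|]; lra.
Qed.

Lemma two_point_majorant_concave : concave01 two_point_majorant.
Proof.
params; move=> x y t _ _ /andP[t0 t1]; rewrite /two_point_majorant /low_line le_min.
have [mx_le_bx mx_le_Lx] : Order.min (b * x) (low_line x) <= b * x /\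
    Order.min (b * x) (low_line x) <= low_line x by rewrite !ge_min !lexx orbT.
have [my_le_by my_le_Ly] : Order.min (b * y) (low_line y) <= b * y /\
    Order.min (b * y) (low_line y) <= low_line y by rewrite !ge_min !lexx orbT.
move: mx_le_bx mx_le_Lx my_le_by my_le_Ly; rewrite /low_line.
move: (Order.min (b * x) _) (Order.min (b * y) _) => mx my *.
by apply/andP; split; nra.
Qed.

Lemma two_point_majorant_major q :
  0 <= q <= 1 -> revenue_curve two_point q <= two_point_majorant q.
Proof.
params; case/andP=> q0 q1; rewrite /revenue_curve /two_point_majorant.
case: (ltP q p) => qp.
  rewrite quantile_two_point_high ?q0 // min_l ?low_line_ge_high ?(ltW qp) //.
  by rewrite mulrC.
move: q1; rewrite le_eqVlt => /orP[/eqP->|q1].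
  rewrite mul1r le_min; apply/andP; split; apply: le_trans (quantile_value1_le0 _) _.
    by rewrite mulr1; lra.
  by apply: le_trans (low_line_ge_low (lexx 1)); rewrite mulr1.
rewrite quantile_two_point_low ?qp // le_min mulrC low_line_ge_low ?(ltW q1) // andbT.
by rewrite ler_pM2r; lra.
Qed.

(* Every concave majorant g of the revenue curve lies above the low line on
   ]p, 1[: by concavity between p - d and 1 - d, up to a slack linear in d. *)
Lemma low_line_below_slack g q d : concave01 g ->
  (forall q', 0 <= q' <= 1 -> revenue_curve two_point q' <= g q') ->
  p < q < 1 -> 0 < d < Order.min p (1 - q) ->
  low_line q <= g q + d * ((b - low_slope) + (a - low_slope)).
Proof.
params; move=> g_concave g_major /andP[pq q1] /andP[d0]; rewrite lt_min => /andP[dp dq].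
pose x := p - d; pose y := 1 - d; pose t := (1 - d - q) / (1 - p).
have tE : t * (1 - p) = 1 - d - q by rewrite /t mulfVK //; apply/eqP => h; lra.
have t0 : 0 <= t by rewrite /t divr_ge0 //; lra.
have t1 : t <= 1 by rewrite /t ler_pdivrMr; lra.
have txy : t * x + (1 - t) * y = q.
  have -> : t * x + (1 - t) * y = 1 - d - t * (1 - p) by rewrite /x /y; ring.
  by rewrite tE; ring.
have gx : x * b <= g x.
  have := g_major x; rewrite /revenue_curve quantile_two_point_high /x; last lra.
  by apply; lra.
have gy : y * a <= g y.
  have := g_major y; rewrite /revenue_curve quantile_two_point_low /y; last lra.
  by apply; lra.
have conc : t * g x + (1 - t) * g y <= g q.
  by rewrite -[in X in _ <= g X]txy; apply: g_concave; rewrite /x /y; lra.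
have decomposition : low_line q = t * (x * b) + (1 - t) * (y * a)
    + t * (b - low_slope) * d + (1 - t) * (a - low_slope) * d.
  have ea : a = low_slope * (1 - p) + p * b by rewrite low_slopeE; ring.
  by rewrite -{1}txy /low_line /x /y [in RHS]ea; ring.
have sa := low_slope_le_a.
have i1 : t * (x * b) <= t * g x by rewrite ler_wpM2l.
have i2 : (1 - t) * (y * a) <= (1 - t) * g y by rewrite ler_wpM2l // subr_ge0.
have i3 : t * (b - low_slope) * d <= (b - low_slope) * d.
  by rewrite -mulrA ler_piMl // mulr_ge0 //; lra.
have i4 : (1 - t) * (a - low_slope) * d <= (a - low_slope) * d.
  by rewrite -mulrA ler_piMl ?mulr_ge0 //; lra.
rewrite decomposition; lra.
Qed.

Lemma low_line_below g q : concave01 g ->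
  (forall q', 0 <= q' <= 1 -> revenue_curve two_point q' <= g q') ->
  p < q < 1 -> low_line q <= g q.
Proof.
params; move=> g_concave g_major pq1; have := pq1 => /andP[pq q1].
apply: (le_up_to_slack (K := (b - low_slope) + (a - low_slope))
  (delta := Order.min p (1 - q))).
- by rewrite lt_min; apply/andP; split; lra.
- by have := low_slope_le_a; lra.
- by move=> d; exact: low_line_below_slack.
Qed.

Lemma ironed_two_point_high q : 0 < q < p -> ironed_revenue two_point q = b * q.
Proof.
params; case/andP=> q0 qp.
have majorE : b * q = two_point_majorant q.
  by rewrite /two_point_majorant min_l // low_line_ge_high // ltW.
rewrite majorE; apply: ironed_revenueE.
- exact: two_point_majorant_concave.
- exact: two_point_majorant_major.
move=> g _ g_major; rewrite -majorE.
have := g_major q; rewrite /revenue_curve quantile_two_point_high; last by lra.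
by rewrite mulrC; apply; lra.
Qed.

Lemma ironed_two_point_low q : p < q < 1 -> ironed_revenue two_point q = low_line q.
Proof.
move=> pq1; have := pq1 => /andP[pq q1].
have majorE : low_line q = two_point_majorant q.
  by rewrite /two_point_majorant min_r // low_line_le_high // ltW.
rewrite majorE; apply: ironed_revenueE.
- exact: two_point_majorant_concave.
- exact: two_point_majorant_major.
by move=> g g_concave g_major; rewrite -majorE; exact: low_line_below.
Qed.

(* Virtual values: the high value is unironed, the low value gets the slope
   of the ironed segment. *)
Lemma vv_two_point_high : virtual_value two_point b = b.
Proof.
params; rewrite /virtual_value cdf_two_point (ltW a_lt_b) lexx /= /two_point_pmf eqxx.
have mid : (0 < 1 - (1 - p + p) + p / 2) && (1 - (1 - p + p) + p / 2 < p).
  by apply/andP; split; lra.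
apply: (derive1_locally_affine (t := 0) mid) => q /ironed_two_point_high ->.
by rewrite addr0.
Qed.

Lemma vv_two_point_low : virtual_value two_point a = low_slope.
Proof.
params; rewrite /virtual_value cdf_two_point lexx (lt_geF a_lt_b) addr0 /=.
rewrite /two_point_pmf (lt_eqF a_lt_b).
have mid : (p < 1 - (1 - p) + (1 - p) / 2) && (1 - (1 - p) + (1 - p) / 2 < 1).
  by apply/andP; split; lra.
exact: (derive1_locally_affine mid ironed_two_point_low).
Qed.

End TwoPoint.

Section SetSums.
Variables (R : numDomainType) (n : nat) (w : 'I_n -> R).
Implicit Types T U : {set 'I_n}.

Lemma sum_le_subset T U : T \subset U -> (forall i, i \in U -> 0 <= w i) ->
  \sum_(i in T) w i <= \sum_(i in U) w i.
Proof.
move=> TU w_ge0; rewrite [X in _ <= X](big_setID T) /= (finset.setIidPr TU) lerDl.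
by apply: sumr_ge0 => i; rewrite inE => /andP[_ /w_ge0].
Qed.

Lemma sum_le_drop T U j : T \subset U :\ j -> j \in U ->
  (forall i, i \in U -> 0 <= w i) -> \sum_(i in T) w i <= \sum_(i in U) w i - w j.
Proof.
move=> TUj jU w_ge0; rewrite (big_setD1 _ jU) /= addrC addrK.
by apply: sum_le_subset => // i; rewrite inE => /andP[_ /w_ge0].
Qed.

Lemma sum_lt_proper T U : T \proper U -> (forall i, i \in U -> 0 < w i) ->
  \sum_(i in T) w i < \sum_(i in U) w i.
Proof.
case/fintype.properP=> TU [j jU jT] w_gt0.
apply: (le_lt_trans (@sum_le_drop T U j _ jU _)); last by rewrite ltrBlDr ltrDl w_gt0.
- apply/fintype.subsetP => t tT; rewrite finset.in_setD1 (fintype.subsetP TU t tT) andbT.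
  by apply: contraNneq jT => <-.
- by move=> i /w_gt0 /ltW.
Qed.

End SetSums.

Section MechanismFacts.
Variables (R : realType) (n : nat) (D : 'I_n -> fdist R) (I : {set {set 'I_n}})
  (tb : {set {set 'I_n}} -> {set 'I_n}).
Hypothesis tb_rule : tie_breaking_rule tb.

Lemma winners_strict_opt S b T0 : T0 \in candidates D I S b ->
  (forall T, T \in candidates D I S b -> T != T0 -> vv_weight D b T < vv_weight D b T0) ->
  winners D I tb S b = T0.
Proof.
move=> T0_cand T0_opt.
have optE : optimal_sets D I S b = [set T0]%SET.
  apply/setP => T; rewrite finset.in_set1 inE.
  have [->|T_ne] := eqVneq T T0; rewrite ?T0_cand /=.
    apply/forall_inP => T' T'_cand; have [->//|] := eqVneq T' T0.
    by move/(T0_opt _ T'_cand)/ltW.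
  apply/negbTE; rewrite negb_and; case T_cand: (T \in candidates D I S b) => //=.
  by apply/forall_inPn; exists T0 => //; rewrite -ltNge T0_opt.
have T0_ne : [set T0]%SET != finset.set0.
  by apply/finset.set0Pn; exists T0; rewrite finset.in_set1.
by have /finset.set1P := tb_rule T0_ne; rewrite /winners optE.
Qed.

Lemma critical_bid_min S b i z0 : z0 \in fd_supp (D i) ->
  i \in winners D I tb S (upd b i z0) -> (forall z, z \in fd_supp (D i) -> z0 <= z) ->
  critical_bid D I tb S b i = z0.
Proof.
move=> z0_supp z0_wins z0_min; apply: inf_attained; first by split.
by move=> z [/z0_min].
Qed.

Lemma upd_id (b : 'I_n -> R) i : upd b i (b i) = b.
Proof. by apply/funext => j; rewrite /upd; case: eqP => [->|]. Qed.

Lemma expect_point_masses l h (b : 'I_n -> R) :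
  (forall i, i \in l -> fd_supp (D i) = [:: b i] /\ fd_pmf (D i) (b i) = 1) ->
  expect D l h b = h b.
Proof.
elim: l => //= i l IH l_pm; have [supp_i pmf_i] := l_pm i (mem_head _ _).
rewrite supp_i big_seq1 pmf_i mul1r upd_id IH // => j jl; apply: l_pm.
by rewrite inE jl orbT.
Qed.

End MechanismFacts.

Section TightPairs.
Variables (n : nat) (I : {set {set 'I_n}}).
Hypothesis I_dc : downward_closed I.
Implicit Types A B T : {set 'I_n}.

Definition violating A B : Prop :=
  [/\ A \in I, B \in I, (#|B| < #|A|)%N & forall x, x \in A :\: B -> x |: B \notin I].

Definition tight A B : bool :=
  [forall i in A :\: B, forall y in B :\: A, y |: (A :\ i) \notin I].

Lemma violating_of_not_exchange : ~ exchange_axiom I -> exists A B, violating A B.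
Proof.
move=> no_exchange; apply: contrapT => no_pair; apply: no_exchange => A B hA hB ltBA.
apply: contrapT => no_x; apply: no_pair; exists A, B; split => // x xAB.
by apply/negP => xB_feasible; apply: no_x; exists x.
Qed.

Lemma violating_exchange A B i y : violating A B -> i \in A :\: B -> y \in B :\: A ->
  y |: (A :\ i) \in I ->
  violating (y |: (A :\ i)) B /\ (#|B :\: (y |: (A :\ i))| < #|B :\: A|)%N.
Proof.
move=> [hA hB ltBA no_ext]; rewrite !inE => /andP[iB iA] /andP[yA yB] A'_feas.
have cardA' : #|y |: (A :\ i)| = #|A|.
  rewrite finset.cardsU1 (finset.cardsD1 i A) iA !inE negb_and yA orbT.
  by rewrite add1n.
split; first (split; rewrite ?cardA' //).
  move=> x; rewrite !inE => /andP[xB /orP[/eqP xy|/andP[_ xA]]].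
    by rewrite xy yB in xB.
  by apply: no_ext; rewrite !inE xB xA.
apply: fintype.proper_card; apply/fintype.properP; split.
  apply/fintype.subsetP => x; rewrite !inE negb_or => /andP[/andP[_ xiA] xB].
  rewrite xB andbT; apply: contra xiA => xA; rewrite xA andbT.
  by apply: contraNneq iB => <-.
by exists y; rewrite !inE ?yA ?yB // eqxx.
Qed.

Lemma exchange_of_not_tight A B : violating A B -> ~~ tight A B ->
  exists A', violating A' B /\ (#|B :\: A'| < #|B :\: A|)%N.
Proof.
move=> vAB; rewrite negb_forall_in => /exists_inP[i iAB].
rewrite negb_forall_in => /exists_inP[y yBA]; rewrite negbK => A'_feas.
by exists (y |: (A :\ i)); exact: violating_exchange.
Qed.

Lemma tighten A B : violating A B -> exists A', violating A' B /\ tight A' B.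
Proof.
move: {2}#|B :\: A| (leqnn #|B :\: A|) => k; elim: k A => [|k IH] A hk vAB;
  have [tAB|/(exchange_of_not_tight vAB)[A' [vA'B lt]]] := boolP (tight A B);
  try by exists A.
  by have := leq_trans lt hk.
by apply: (IH A' _ vA'B); rewrite -ltnS (leq_trans lt).
Qed.

Lemma tight_closed A B T j : tight A B -> T \in I -> T \subset A :|: B ->
  j \in A :\: B -> A :\ j \subset T -> T \subset A.
Proof.
move=> /forall_inP tAB T_feas TAB jAB AjT; apply/fintype.subsetP => t tT.
apply: contraT => tA; have tBA : t \in B :\: A.
  by have := fintype.subsetP TAB t tT; rewrite !inE (negbTE tA) /= => ->.
have /forall_inP/(_ t tBA) := tAB j jAB; apply: contraNT => _.
apply: (I_dc T_feas); apply/fintype.subsetP => k; rewrite !inE.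
case/orP=> [/eqP->//|kAj]; apply: (fintype.subsetP AjT).
by rewrite !inE.
Qed.

Lemma violating_diffs A B : violating A B ->
  (exists i, i \in A :\: B) /\ (exists y, y \in B :\: A).
Proof.
move=> [hA hB ltBA no_ext].
have [i iA iB] : exists2 i, i \in A & i \notin B.
  apply/exists_inP; rewrite -negb_forall_in; apply: contraL ltBA => /forall_inP AB.
  by rewrite -leqNgt; apply/fintype.subset_leq_card/fintype.subsetP.
have iAB : i \in A :\: B by rewrite inE iA iB.
split; first by exists i.
have [y yB yA] : exists2 y, y \in B & y \notin A.
  apply/exists_inP; rewrite -negb_forall_in; apply/negP => /forall_inP BA.
  have /negP := no_ext i iAB; apply; apply: (I_dc hA).
  by apply/fintype.subsetP => x; rewrite !inE => /orP[/eqP->//|/BA].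
by exists y; rewrite inE yA yB.
Qed.

Lemma non_matroid_tight_pair : finset.set0 \in I -> ~ is_matroid I ->
  exists A B, [/\ A \in I, B \in I, tight A B,
    exists i, i \in A :\: B & exists y, y \in B :\: A].
Proof.
move=> I0 not_matroid.
have [A0 [B vA0B]] : exists A B, violating A B.
  by apply: violating_of_not_exchange => exchange; apply: not_matroid.
have [A [vAB tAB]] := tighten vA0B.
have [[i iAB] [y yBA]] := violating_diffs vAB.
by case: vAB => hA hB _ _; exists A, B; split => //; [exists i | exists y].
Qed.

End TightPairs.

Section NumericParameters.
Variables (R : realType) (n : nat).

(* N exceeds every count of bidders; low and p are small enough that the low
   value of a two-point {low, N} distribution keeps a positive virtual value
   while n bidders paying low still pay less than one unit. *)
Definition big_value : R := n.+1%:R.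
Definition low_value : R := (2 * big_value)^-1.
Definition high_prob : R := low_value / (2 * big_value).

Lemma big_value_ge1 : 1 <= big_value. Proof. by rewrite ler1n. Qed.

Lemma big_value_gt0 : 0 < big_value. Proof. exact: lt_le_trans big_value_ge1. Qed.

Lemma low_value_gt0 : 0 < low_value.
Proof. by have := big_value_ge1; rewrite /low_value invr_gt0; lra. Qed.

Lemma low_value_double : low_value * (2 * big_value) = 1.
Proof.
have big2_gt0 : 0 < 2 * big_value by have := big_value_ge1; lra.
by rewrite /low_value mulVf // gt_eqF.
Qed.

Lemma low_lt_big : low_value < big_value.
Proof. by have := big_value_ge1; have := low_value_double; nra. Qed.

Lemma high_prob_gt0 : 0 < high_prob.
Proof.
have big2_gt0 : 0 < 2 * big_value by have := big_value_ge1; lra.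
by rewrite /high_prob divr_gt0 ?low_value_gt0.
Qed.

(* p N = low / 2 < low: the virtual value at the low value is positive. *)
Lemma high_prob_big : high_prob * big_value < low_value.
Proof.
have -> : high_prob * big_value = low_value / 2.
  by rewrite /high_prob; field; rewrite nat1r pnatr_eq0.
by have := low_value_gt0; lra.
Qed.

Lemma high_prob_lt1 : high_prob < 1.
Proof. by have := high_prob_big; have := big_value_ge1; have := low_lt_big; nra. Qed.

Lemma half_gt0 : 0 < 1 / 2 :> R. Proof. lra. Qed.
Lemma half_lt1 : 1 / 2 < 1 :> R. Proof. lra. Qed.

Lemma card_lt_big (S : {set 'I_n}) : #|S|%:R < big_value.
Proof. by rewrite ltr_nat ltnS -[X in (_ <= X)%N]card_ord max_card. Qed.

Lemma low_payments_lt (S S' : {set 'I_n}) : (0 < #|S'|)%N ->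
  low_value * #|S|%:R < #|S'|%:R.
Proof.
move=> S'0; have := card_lt_big S; have := low_value_double.
have : 1 <= #|S'|%:R :> R by rewrite ler1n.
have := low_value_gt0; nra.
Qed.

End NumericParameters.

Section Instance.
Variables (R : realType) (n : nat) (I : {set {set 'I_n}})
  (tb : {set {set 'I_n}} -> {set 'I_n}).
Hypotheses (tb_rule : tie_breaking_rule tb) (I_dc : downward_closed I).
Variables (A B : {set 'I_n}).
Hypotheses (hA : A \in I) (hB : B \in I) (tAB : tight I A B)
  (AB_ne : exists i, i \in A :\: B) (BA_ne : exists y, y \in B :\: A).

Local Notation N := (big_value R n).
Local Notation low := (low_value R n).

(* Bidders of A ∩ B: point mass at N; of A \ B: low or N, virtual values
   positive; of B \ A: point mass at 1; others: 0 or 1, with negative virtual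
   value at 0. *)
Definition instance_dist (i : 'I_n) : fdist R :=
  if i \in A then
    if i \in B then point_mass (le_trans ler01 (big_value_ge1 R n))
    else two_point (ltW (low_value_gt0 R n)) (low_lt_big R n)
           (high_prob_gt0 R n) (high_prob_lt1 R n)
  else if i \in B then point_mass (@ler01 R)
  else two_point (lexx (0 : R)) (@ltr01 R) (half_gt0 R) (half_lt1 R).

(* The bid profile: bidders of A bid N, of B \ A bid 1, the others 0.  On the
   green bidders B these are the only possible values. *)
Definition instance_bids (i : 'I_n) : R :=
  if i \in A then N else if i \in B then 1 else 0.

Local Notation D := instance_dist.
Local Notation beta := instance_bids.

Lemma bids_supp i : beta i \in fd_supp (D i).
Proof.
by rewrite /beta /D; case: (i \in A); case: (i \in B); rewrite /= !inE eqxx ?orbT.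
Qed.

Lemma green_point_mass i : i \in B ->
  fd_supp (D i) = [:: beta i] /\ fd_pmf (D i) (beta i) = 1.
Proof. by move=> iB; rewrite /D /beta iB; case: (i \in A). Qed.

Lemma supp_A_minus_B i : i \in A :\: B -> fd_supp (D i) = [:: low; N].
Proof. by rewrite inE => /andP[/negbTE iB iA]; rewrite /D iA iB. Qed.

Lemma phi_A i : i \in A -> phi D i N = N.
Proof.
move=> iA; rewrite /phi /D iA; case: (i \in B); first exact: vv_point_mass.
exact: vv_two_point_high.
Qed.

Lemma phi_low_gt0 i : i \in A :\: B -> 0 < phi D i low.
Proof.
rewrite inE => /andP[/negbTE iB iA]; rewrite /phi /D iA iB vv_two_point_low.
exact: low_slope_gt0 (high_prob_lt1 R n) (high_prob_big R n).
Qed.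

Lemma phi_B_minus_A i : i \in B :\: A -> phi D i 1 = 1.
Proof. by rewrite inE => /andP[/negbTE iA iB]; rewrite /phi /D iA iB vv_point_mass. Qed.

Lemma phi_outside i : i \notin A :|: B -> phi D i 0 < 0.
Proof.
rewrite inE negb_or => /andP[/negbTE iA /negbTE iB].
by rewrite /phi /D iA iB vv_two_point_low low_slope_lt0 ?half_lt1 // mulr1 half_gt0.
Qed.

Lemma winners_all k b : k \in A :\: B ->
  (forall i, i \in A -> i != k -> phi D i (b i) = N) -> 0 < phi D k (b k) ->
  (forall i, i \in B :\: A -> phi D i (b i) = 1) ->
  (forall i, i \notin A :|: B -> phi D i (b i) < 0) ->
  winners D I tb [set: 'I_n] b = A.
Proof.
move=> kAB phiA phik phiBA phi_out.
have N_gt0 := big_value_gt0 R n.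
have phiA_gt0 i : i \in A -> 0 < phi D i (b i).
  by move=> iA; have [->//|ik] := eqVneq i k; rewrite phiA.
have phi_ge0 i : i \in A :|: B -> 0 <= phi D i (b i).
  rewrite inE; case iA: (i \in A) => /= iB; first exact/ltW/phiA_gt0.
  by rewrite phiBA // inE iA iB.
have remE : remaining D [set: 'I_n] b = A :|: B.
  apply/setP => i; rewrite inE finset.in_setT /=.
  case iAB: (i \in A :|: B); first by rewrite phi_ge0.
  by apply/negbTE; rewrite -ltNge phi_out ?iAB.
have weightAB : vv_weight D b (A :|: B) = vv_weight D b A + #|B :\: A|%:R.
  rewrite /vv_weight (big_setID A) /= (finset.setIidPr (finset.subsetUl A B)).
  rewrite finset.setDUl finset.setDv finset.set0U; congr (_ + _).
  by rewrite (eq_bigr (fun=> 1)) ?sumr_const //; exact: phiBA.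
apply: winners_strict_opt => //; first by rewrite inE hA remE finset.subsetUl.
move=> T; rewrite inE remE => /andP[T_feas TAB] TA.
case: (boolP [exists j in A, (j \notin T) && (j != k)]).
  case/exists_inP => j jA /andP[jT jk].
  have TABj : T \subset (A :|: B) :\ j.
    apply/fintype.subsetP => t tT; rewrite finset.in_setD1 (fintype.subsetP TAB t tT).
    by rewrite andbT; apply: contraNneq jT => <-.
  have jAB : j \in A :|: B by rewrite inE jA.
  apply: le_lt_trans (sum_le_drop TABj jAB phi_ge0) _.
  rewrite /vv_weight in weightAB *; rewrite weightAB phiA //.
  by have := card_lt_big R (B :\: A); lra.
rewrite negb_exists_in => /forall_inP noj.
have AkT : A :\ k \subset T.
  apply/fintype.subsetP => j; rewrite !inE => /andP[jk jA].
  by have := noj j jA; rewrite negb_and jk orbF negbK.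
have TA_sub := tight_closed I_dc tAB T_feas TAB kAB AkT.
apply: sum_lt_proper; last exact: phiA_gt0.
by rewrite fintype.properE TA_sub; apply: contra TA => AT; rewrite finset.eqEsubset TA_sub.
Qed.

Lemma winners_green b : (forall i, i \in B -> 0 < phi D i (b i)) ->
  winners D I tb B b = B.
Proof.
move=> phiB.
have remE : remaining D B b = B.
  by apply/setP => i; rewrite inE; case iB: (i \in B); rewrite //= ltW ?phiB.
apply: winners_strict_opt => //; first by rewrite inE hB remE fintype.subxx.
move=> T; rewrite inE remE => /andP[_ TB] TnB; apply: sum_lt_proper => //.
by rewrite fintype.properE TB; apply: contra TnB => BT; rewrite finset.eqEsubset TB.
Qed.

Lemma phi_bids_A i : i \in A -> phi D i (beta i) = N.
Proof. by move=> iA; rewrite /beta iA phi_A. Qed.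

Lemma phi_bids_B_minus_A i : i \in B :\: A -> phi D i (beta i) = 1.
Proof.
move=> iBA; have := iBA; rewrite inE /beta => /andP[/negbTE -> ->].
exact: phi_B_minus_A.
Qed.

Lemma phi_bids_green_gt0 i : i \in B -> 0 < phi D i (beta i).
Proof.
move=> iB; case iA: (i \in A); first by rewrite phi_bids_A // big_value_gt0.
by rewrite phi_bids_B_minus_A ?ltr01 // inE iA iB.
Qed.

Lemma phi_bids_outside i : i \notin A :|: B -> phi D i (beta i) < 0.
Proof.
move=> iAB; have := iAB; rewrite inE negb_or /beta => /andP[/negbTE -> /negbTE ->].
exact: phi_outside.
Qed.

Lemma winners_bids_all : winners D I tb [set: 'I_n] beta = A.
Proof.
have [k kAB] := AB_ne; have := kAB; rewrite inE => /andP[_ kA].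
apply: (winners_all kAB).
- by move=> i iA _; exact: phi_bids_A.
- by rewrite phi_bids_A // big_value_gt0.
- exact: phi_bids_B_minus_A.
- exact: phi_bids_outside.
Qed.

Lemma winners_low_bid i : i \in A :\: B ->
  winners D I tb [set: 'I_n] (upd beta i low) = A.
Proof.
move=> iAB; have := iAB; rewrite inE => /andP[iB iA].
apply: (winners_all iAB) => [j jA ji|||j]; rewrite /upd ?(negbTE ji) ?eqxx.
- exact: phi_bids_A.
- exact: phi_low_gt0.
- move=> j jBA; have [ji|_] := eqVneq j i; last exact: phi_bids_B_minus_A.
  by move: jBA; rewrite ji inE iA.
by have [->|_] := eqVneq j i; [rewrite inE iA | exact: phi_bids_outside].
Qed.

Lemma revenue_all :
  Rev D I tb [set: 'I_n] beta = \sum_(j in A) (if j \in B then N else low).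
Proof.
rewrite /Rev winners_bids_all; apply: eq_bigr => j jA; case jB: (j \in B).
  have [suppj _] := green_point_mass jB; have betaj : beta j = N by rewrite /beta jA.
  apply: critical_bid_min; first by rewrite suppj betaj mem_head.
    by rewrite -betaj upd_id winners_bids_all.
  by move=> z; rewrite suppj betaj inE => /eqP ->.
have jAB : j \in A :\: B by rewrite inE jB jA.
apply: critical_bid_min; first by rewrite supp_A_minus_B // mem_head.
  by rewrite winners_low_bid.
rewrite supp_A_minus_B // => z; rewrite !inE => /orP[]/eqP-> //.
exact/ltW/low_lt_big.
Qed.

Lemma revenue_green : Rev D I tb B beta = \sum_(j in B) beta j.
Proof.
rewrite /Rev winners_green; last exact: phi_bids_green_gt0.
apply: eq_bigr => j jB.
have [suppj _] := green_point_mass jB.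
apply: critical_bid_min; first by rewrite suppj mem_head.
  by rewrite upd_id winners_green //; exact: phi_bids_green_gt0.
by move=> z; rewrite suppj inE => /eqP ->.
Qed.

(* The comparison: A ∩ B contributes the same, and |A \ B| low < |B \ A|. *)
Lemma revenue_drop : Rev D I tb [set: 'I_n] beta < Rev D I tb B beta.
Proof.
rewrite revenue_all revenue_green (big_setID B) [X in _ < X](big_setID A) /=.
rewrite (finset.setIC B A) (eq_bigr beta); last first.
  by move=> i; rewrite inE => /andP[iA ->]; rewrite /beta iA.
rewrite ltrD2l (eq_bigr (fun=> low)); last by move=> i; rewrite inE => /andP[/negbTE ->].
rewrite [X in _ < X](eq_bigr (fun=> 1)); last first.
  by move=> i; rewrite inE => /andP[/negbTE iA iB]; rewrite /beta iA iB.
rewrite !sumr_const -mulr_natr low_payments_lt //.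
by have [y yBA] := BA_ne; apply/card_gt0P; exists y.
Qed.

End Instance.

Theorem mainTheorem2 (R : realType) (n : nat) (I : {set {set 'I_n}})
    (tb : {set {set 'I_n}} -> {set 'I_n}) :
  finset.set0 \in I -> downward_closed I -> ~ is_matroid I ->
  tie_breaking_rule tb ->
  exists (D : 'I_n -> fdist R) (G : {set 'I_n}) (bR : 'I_n -> R),
    [/\ G != finset.set0,
        (forall i, i \in ~: G -> bR i \in fd_supp (D i)) &
        expect D (enum G) (Rev D I tb [set: 'I_n]) bR
          < expect D (enum G) (Rev D I tb G) bR].
Proof.
move=> I0 I_dc not_matroid tb_rule.
have [A [B [hA hB tAB AB_ne BA_ne]]] := non_matroid_tight_pair I_dc I0 not_matroid.
pose D := instance_dist R A B; pose beta := instance_bids R A B.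
(* Green bidders have point masses at their bids: expectations are values. *)
have expectE h : expect D (enum B) h beta = h beta.
  by apply: expect_point_masses => i; rewrite mem_enum; exact: green_point_mass.
exists D, B, beta; split.
- by have [y] := BA_ne; rewrite inE => /andP[_ yB]; apply/finset.set0Pn; exists y.
- by move=> i _; exact: bids_supp.
by rewrite !expectE; exact: revenue_drop.
Qed.
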